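(* If $\beta$ is a real quadratic irrational of conductor $f$, then there exist an integer matrix $B$ with $\det B=f$ and a real quadratic irrational $\alpha$ of conductor $1$ such that $\beta=B\cdot\alpha$.
   Context: For an integer matrix $B=\begin{pmatrix}a&b\\c&d\end{pmatrix}$, $B\cdot\alpha=\frac{a\alpha+b}{c\alpha+d}$. If $\beta$ is a root of $a\beta^2+b\beta+c=0$ with $a,b,c\in\mathbb Z$, $\gcd(a,b,c)=1$, and $b^2-4ac=f^2\Delta_0$ with $\Delta_0$ a fundamental discriminant and $f$ a positive integer, then $f$ is the conductor of $\beta$. *)

From HB Require Import structures.
From mathcomp Require Import all_boot all_order all_algebra.
From mathcomp Require Import reals.
Set Implicit Arguments. Unset Strict Implicit. Unset Printing Implicit Defensive.
Import Order.TTheory GRing.Theory Num.Theory.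
Local Open Scope ring_scope.

(* An integer is squarefree if no square of a prime divides it
   (so 0 is not squarefree). *)
Definition int_squarefree (D : int) : Prop :=
  forall p : nat, prime p -> ~ (((p ^ 2)%N%:Z %| D)%Z).

Definition fundamental_disc (D : int) : Prop :=
  (D <> 1 /\ (D %% 4)%Z = 1 /\ int_squarefree D) \/
  (exists m : int, D = 4 * m /\ ((m %% 4)%Z = 2 \/ (m %% 4)%Z = 3)
                   /\ int_squarefree m).

Definition has_conductor (R : realType) (x : R) (f : nat) : Prop :=
  (0 < f)%N /\
  exists a b c : int,
    gcdz (gcdz a b) c = 1 /\
    a%:~R * x ^+ 2 + b%:~R * x + c%:~R = 0 /\
    exists D0 : int, fundamental_disc D0 /\ b ^+ 2 - 4 * a * c = (f ^ 2)%N%:Z * D0.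

Definition mob_den (R : realType) (B : 'M[int]_2) (x : R) : R :=
  (B 1 0)%:~R * x + (B 1 1)%:~R.
Definition mob_act (R : realType) (B : 'M[int]_2) (x : R) : R :=
  ((B 0 0)%:~R * x + (B 0 1)%:~R) / mob_den B x.

From HB Require Import structures.
From mathcomp Require Import all_boot all_order all_algebra.
From mathcomp Require Import reals.
From mathcomp Require Import zify ring.
Import Order.TTheory GRing.Theory Num.Theory.
Set Implicit Arguments. Unset Strict Implicit. Unset Printing Implicit Defensive.
Local Open Scope ring_scope.

(* Let beta be a root of the primitive form q = [a, b, c] of discriminant
   f^2 D0. For a prime p | f, one finds r with p | 2ar + b and
   p^2 | q(r, 1) (by inverting 2a mod p^2 when p is odd, by a parity choice
   using D0 = 0, 1 mod 4 when p = 2; if p | a, swap x and y first). The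
   substitution (x, y) |-> (p x + r y, y) then turns q into p^2 times a
   primitive form. Composing these over the prime factors of f gives M with
   det M = f and q o M = f^2 q', q' primitive of discriminant D0. The point
   alpha = adj(M) . beta is a root of q', it is irrational, and M . alpha = beta. *)

Section Matrix2.
Variable R : comPzRingType.

Lemma ord0_ord2 : ord0 = 0 :> 'I_2. Proof. exact: val_inj. Qed.
Lemma lift0_ord2 : lift ord0 ord0 = 1 :> 'I_2. Proof. exact: val_inj. Qed.
Lemma lift1_ord2 : lift 1 ord0 = 0 :> 'I_2. Proof. exact: val_inj. Qed.

Lemma mulmx2E (M N : 'M[R]_2) i j : (M *m N) i j = M i 0 * N 0 j + M i 1 * N 1 j.
Proof. by rewrite !mxE !big_ord_recl big_ord0 addr0 ord0_ord2 lift0_ord2. Qed.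

Lemma det_mx2 (M : 'M[R]_2) : \det M = M 0 0 * M 1 1 - M 0 1 * M 1 0.
Proof.
rewrite (expand_det_row _ 0) !big_ord_recl big_ord0 /cofactor !det_mx11 !mxE /=.
by rewrite ord0_ord2 lift0_ord2 lift1_ord2 /=; ring.
Qed.

Definition mx2 (a b c d : R) : 'M[R]_2 :=
  \matrix_(i, j) if i == 0 then (if j == 0 then a else b) else (if j == 0 then c else d).

End Matrix2.

Lemma det_adj_neq0 (R : idomainType) n (A : 'M[R]_n) : \det A != 0 -> \det (\adj A) != 0.
Proof.
move=> detA0; have := congr1 determinant (mul_mx_adj A).
rewrite det_mulmx det_scalar => detAadj.
by apply: contraNneq (expf_neq0 n detA0) => detadj0; rewrite -detAadj detadj0 mulr0.
Qed.

Record qform := QForm { qa : int; qb : int; qc : int }.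

Definition qval (q : qform) (x y : int) : int := qa q * x ^+ 2 + qb q * x * y + qc q * y ^+ 2.
Definition qdisc (q : qform) : int := qb q ^+ 2 - 4 * qa q * qc q.
Definition qprimitive (q : qform) : Prop := gcdz (gcdz (qa q) (qb q)) (qc q) = 1.
Definition qscale (k : int) (q : qform) : qform := QForm (k * qa q) (k * qb q) (k * qc q).

(* The form (x, y) |-> q (M 0 0 * x + M 0 1 * y, M 1 0 * x + M 1 1 * y). *)
Definition qsub (q : qform) (M : 'M[int]_2) : qform :=
  QForm (qval q (M 0 0) (M 1 0))
        (2 * qa q * M 0 0 * M 0 1 + qb q * (M 0 0 * M 1 1 + M 0 1 * M 1 0)
           + 2 * qc q * M 1 0 * M 1 1)
        (qval q (M 0 1) (M 1 1)).

Lemma qscale1 q : qscale 1 q = q.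
Proof. by case: q => a b c; rewrite /qscale /= !mul1r. Qed.

Lemma qscaleM k l q : qscale k (qscale l q) = qscale (k * l) q.
Proof. by rewrite /qscale /= !mulrA. Qed.

Lemma qsub1 q : qsub q 1%:M = q.
Proof.
by case: q => a b c; rewrite /qsub /qval !mxE /= !(mulr1n, mulr0n); congr QForm; ring.
Qed.

Lemma qsubM q M N : qsub (qsub q M) N = qsub q (M *m N).
Proof. by rewrite /qsub /qval !mulmx2E /=; congr QForm; ring. Qed.

Lemma qsub_scale k q M : qsub (qscale k q) M = qscale k (qsub q M).
Proof. by rewrite /qsub /qval /qscale /=; congr QForm; ring. Qed.

Lemma qdisc_sub q M : qdisc (qsub q M) = \det M ^+ 2 * qdisc q.
Proof. by rewrite /qdisc /qsub /qval det_mx2 /=; ring. Qed.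

Lemma qdisc_scale k q : qdisc (qscale k q) = k ^+ 2 * qdisc q.
Proof. by rewrite /qdisc /qscale /=; ring. Qed.

Lemma qval_complete_square q r :
  4 * qa q * qval q r 1 = (2 * qa q * r + qb q) ^+ 2 - qdisc q.
Proof. by rewrite /qval /qdisc; ring. Qed.

Lemma qprimitive_dvdP q :
  qprimitive q <->
  (forall d, (d %| qa q)%Z -> (d %| qb q)%Z -> (d %| qc q)%Z -> (d %| 1)%Z).
Proof.
split=> [prim_q d da db dc | dvd1].
  have : (d %| gcdz (gcdz (qa q) (qb q)) (qc q))%Z by rewrite !dvdz_gcd da db dc.
  by rewrite prim_q.
have := dvd1 (gcdz (gcdz (qa q) (qb q)) (qc q)).
rewrite dvdz_gcdr (dvdz_trans (dvdz_gcdl _ _) (dvdz_gcdl _ _)).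
rewrite (dvdz_trans (dvdz_gcdl _ _) (dvdz_gcdr _ _)).
by rewrite dvdzE /= dvdn1 /qprimitive /gcdz /= => /(_ isT isT isT) /eqP ->.
Qed.

Definition swap_mx : 'M[int]_2 := mx2 0 1 1 0.

Lemma qsub_swap q : qsub q swap_mx = QForm (qc q) (qb q) (qa q).
Proof. by rewrite /qsub /qval !mxE /=; congr QForm; ring. Qed.

Lemma det_swap_mx : \det swap_mx = -1.
Proof. by rewrite det_mx2 !mxE. Qed.

Lemma qprimitive_swap q : qprimitive q -> qprimitive (qsub q swap_mx).
Proof. by rewrite /qprimitive qsub_swap /= -gcdzA gcdzC [gcdz (qb q) _]gcdzC. Qed.

Definition disc_mod4 (E : int) : Prop := (E %% 4)%Z = 0 \/ (E %% 4)%Z = 1.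

Lemma fundamental_disc_mod4 D : fundamental_disc D -> disc_mod4 D.
Proof. by case=> [[_ [D1 _]] | [m [-> _]]]; [right | left; lia]. Qed.

Lemma disc_mod4_sqM k E : disc_mod4 E -> disc_mod4 (k ^+ 2 * E).
Proof.
have [t [->|->]] : exists t, k = 2 * t \/ k = 2 * t + 1 by exists (k %/ 2)%Z; lia.
  by rewrite /disc_mod4; nia.
by rewrite /disc_mod4; nia.
Qed.

Lemma sqr_sub_disc_mod4 x E : disc_mod4 E -> (2 %| x - E)%Z -> (4 %| x ^+ 2 - E)%Z.
Proof.
move=> E4 /dvdzP [m x_eq]; have {x_eq} -> : x = E + m * 2 by rewrite -x_eq; ring.
have [k [->|->]] : exists k, E = 4 * k \/ E = 4 * k + 1 by exists (E %/ 4)%Z; case: E4; lia.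
  by apply/dvdzP; exists (4 * k ^+ 2 + 4 * k * m + m ^+ 2 - k); ring.
by apply/dvdzP; exists (4 * k ^+ 2 + m ^+ 2 + k + 4 * k * m + m); ring.
Qed.

Lemma prime_dvdz_sqr (p : nat) b : prime p -> (p%:Z %| b ^+ 2)%Z -> (p%:Z %| b)%Z.
Proof. by move=> p_pr; rewrite !dvdzE expr2 abszM Euclid_dvdM // orbb. Qed.

Lemma qval_root_mod_sq_odd (p : nat) q :
  prime p -> p != 2%N -> ~~ (p%:Z %| qa q)%Z -> (p%:Z ^+ 2 %| qdisc q)%Z ->
  exists r, (p%:Z ^+ 2 %| 2 * qa q * r + qb q)%Z /\ (p%:Z ^+ 2 %| qval q r 1)%Z.
Proof.
move=> p_pr p_neq2 p_ndvd_a p2_dvd_disc.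
have cop_2p : coprimez 2 p%:Z.
  by rewrite coprimezE /= coprime_sym prime_coprime // dvdn_prime2.
have cop_ap : coprimez (qa q) p%:Z.
  by rewrite coprimezE coprime_sym prime_coprime.
have cop_2a_p2 : coprimez (2 * qa q) (p%:Z ^+ 2).
  by rewrite coprimez_pexpr // coprimezMl cop_2p cop_ap.
have cop_p2_4a : coprimez (p%:Z ^+ 2) (4 * qa q).
  rewrite coprimez_sym (_ : 4 = 2 * 2) // -mulrA coprimezMl cop_2a_p2 andbT.
  by rewrite coprimez_pexpr.
have [x [y]] := Bezoutz (2 * qa q) (p%:Z ^+ 2); rewrite (eqP cop_2a_p2) => bezout.
(* x inverts 2a mod p^2, so r = -b x makes 2ar + b, hence 4a q(r, 1), vanish mod p^2. *)
exists (- qb q * x).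
have root_lin : 2 * qa q * (- qb q * x) + qb q = qb q * y * p%:Z ^+ 2.
  transitivity (qb q * (x * (2 * qa q) + y * p%:Z ^+ 2) - qb q * x * (2 * qa q)).
    by rewrite bezout; ring.
  by ring.
split; first by rewrite root_lin dvdz_mull.
rewrite -(Gauss_dvdzr _ cop_p2_4a) qval_complete_square root_lin.
by rewrite rpredB // exprMn dvdz_mull // expr2 dvdz_mull.
Qed.

Lemma qval_root_mod4 q E : ~~ (2 %| qa q)%Z -> qdisc q = 4 * E -> disc_mod4 E ->
  exists r, (2 %| 2 * qa q * r + qb q)%Z /\ (4 %| qval q r 1)%Z.
Proof.
move=> a_odd discq E4.
have [s a_eq] : exists s, qa q = 2 * s + 1.
  have [s [a_eq|a_eq]] : exists s, qa q = 2 * s \/ qa q = 2 * s + 1.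
    by exists (qa q %/ 2)%Z; lia.
    by move: a_odd; rewrite a_eq dvdz_mulr.
  by exists s.
have [b' b_eq] : exists b', qb q = 2 * b'.
  have : (2%N%:Z %| qb q ^+ 2)%Z.
    rewrite (_ : qb q ^+ 2 = 2 * (2 * (E + qa q * qc q))) ?dvdz_mulr //.
    by move: discq; rewrite /qdisc => /eqP; rewrite subr_eq => /eqP ->; ring.
  by move/(prime_dvdz_sqr (isT : prime 2))/dvdzP => [b' ->]; exists b'; ring.
have cop_4a : coprimez 4 (qa q).
  by rewrite (_ : 4 = 2 ^+ 2) // coprimez_pexpl // coprimezE prime_coprime.
(* As a is odd, a (E - b') + b' = E (mod 2). *)
exists (E - b'); split; first by rewrite b_eq -mulrA -mulrDr dvdz_mulr.
rewrite -(Gauss_dvdzr _ cop_4a).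
have -> : qa q * qval q (E - b') 1 = (qa q * (E - b') + b') ^+ 2 - E.
  apply: (mulfI (_ : 4 != 0)) => //.
  by rewrite mulrA qval_complete_square discq b_eq; ring.
apply: sqr_sub_disc_mod4 => //; apply/dvdzP; exists (s * (E - b')).
by rewrite a_eq; ring.
Qed.

Lemma qval_root_mod_sq (p : nat) q E :
  prime p -> ~~ (p%:Z %| qa q)%Z -> qdisc q = p%:Z ^+ 2 * E -> disc_mod4 E ->
  exists r, (p%:Z %| 2 * qa q * r + qb q)%Z /\ (p%:Z ^+ 2 %| qval q r 1)%Z.
Proof.
move=> p_pr p_ndvd_a discq E4.
have [p2 | p_neq2] := eqVneq p 2.
  by move: p_ndvd_a discq; rewrite p2 => a_odd discq; exact: qval_root_mod4 a_odd discq E4.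
have p2_dvd_disc : (p%:Z ^+ 2 %| qdisc q)%Z by rewrite discq dvdz_mulr.
have [r [lin_dvd root_dvd]] := qval_root_mod_sq_odd p_pr p_neq2 p_ndvd_a p2_dvd_disc.
by exists r; split=> //; apply: dvdz_trans lin_dvd; rewrite expr2 dvdz_mulr.
Qed.

Definition qdescent (q : qform) (f : int) : Prop :=
  exists (M : 'M[int]_2) (q' : qform),
    [/\ \det M = f, qprimitive q' & qsub q M = qscale (f ^+ 2) q'].

Lemma qdescent_prime_lead (p : nat) q E :
  prime p -> qprimitive q -> ~~ (p%:Z %| qa q)%Z ->
  qdisc q = p%:Z ^+ 2 * E -> disc_mod4 E -> qdescent q p.
Proof.
move=> p_pr prim_q p_ndvd_a discq E4.
have [r [/dvdzP [s s_eq] /dvdzP [t t_eq]]] := qval_root_mod_sq p_pr p_ndvd_a discq E4.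
exists (mx2 p%:Z r 0 1), (QForm (qa q) s t); split.
- by rewrite det_mx2 !mxE /=; ring.
- apply/qprimitive_dvdP => d /= d_a d_s d_t.
  have d_b : (d %| qb q)%Z.
    by rewrite (_ : qb q = s * p - qa q * (2 * r)) ?rpredB ?dvdz_mulr // -s_eq; ring.
  have d_c : (d %| qc q)%Z.
    rewrite (_ : qc q = t * p%:Z ^+ 2 - qa q * r ^+ 2 - qb q * r) ?rpredB ?dvdz_mulr //.
    by rewrite -t_eq /qval; ring.
  exact: (qprimitive_dvdP q).1 prim_q d d_a d_b d_c.
- rewrite /qsub /qscale !mxE /=; congr QForm.
  + by rewrite /qval; ring.
  + by transitivity (p%:Z * (2 * qa q * r + qb q)); [ring | rewrite s_eq; ring].
  + by rewrite t_eq mulrC.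
Qed.

Lemma qdescent_prime (p : nat) q E :
  prime p -> qprimitive q -> qdisc q = p%:Z ^+ 2 * E -> disc_mod4 E -> qdescent q p.
Proof.
move=> p_pr prim_q discq E4.
have [p_dvd_a | p_ndvd_a] := boolP (p%:Z %| qa q)%Z; last first.
  exact: qdescent_prime_lead p_pr prim_q p_ndvd_a discq E4.
have p_ndvd_c : ~~ (p%:Z %| qc q)%Z.
  apply/negP => p_dvd_c.
  have p_dvd_b : (p%:Z %| qb q)%Z.
    apply: prime_dvdz_sqr p_pr _.
    have -> : qb q ^+ 2 = qdisc q + 4 * qa q * qc q by rewrite /qdisc; ring.
    by rewrite discq rpredD // dvdz_mulr // ?dvdz_mull // expr2 dvdz_mulr.
  have := (qprimitive_dvdP q).1 prim_q _ p_dvd_a p_dvd_b p_dvd_c.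
  by rewrite dvdzE /= dvdn1 => /eqP p1; move: (prime_gt1 p_pr); rewrite p1.
(* By primitivity p does not divide c: swap x and y, descend, and swap back. *)
have discq_swap : qdisc (qsub q swap_mx) = p%:Z ^+ 2 * E.
  by rewrite qdisc_sub det_swap_mx sqrrN expr1n mul1r.
have p_ndvd_swap_a : ~~ (p%:Z %| qa (qsub q swap_mx))%Z by rewrite qsub_swap.
have [M [q' [detM prim_q' qM_eq]]] :=
  qdescent_prime_lead p_pr (qprimitive_swap prim_q) p_ndvd_swap_a discq_swap E4.
exists (swap_mx *m M *m swap_mx), (qsub q' swap_mx); split.
- by rewrite !det_mulmx det_swap_mx detM; ring.
- exact: qprimitive_swap.
- by rewrite -!qsubM qM_eq qsub_scale.
Qed.

Lemma qdisc_descent q q' M (f D : int) :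
  f != 0 -> \det M = f -> qsub q M = qscale (f ^+ 2) q' ->
  qdisc q = f ^+ 2 * D -> qdisc q' = D.
Proof.
move=> f_neq0 detM qM_eq discq.
have f4_neq0 : f ^+ 2 ^+ 2 != 0 by rewrite !expf_neq0.
have := congr1 qdisc qM_eq; rewrite qdisc_sub qdisc_scale detM discq mulrA -expr2.
by move/(mulfI f4_neq0).
Qed.

Lemma qdescent_conductor (f : nat) q D :
  (0 < f)%N -> qprimitive q -> qdisc q = f%:Z ^+ 2 * D -> disc_mod4 D -> qdescent q f.
Proof.
elim/ltn_ind: f q => f IH q f_gt0 prim_q discq D4.
have [f_gt1 | f_le1] := ltnP 1 f; last first.
  have -> : f = 1%N by lia.
  by exists 1%:M, q; rewrite det1 expr1n qsub1 qscale1.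
set p := pdiv f; have p_pr : prime p := pdiv_prime f_gt1.
set f' := (f %/ p)%N; have f_eq : f = (f' * p)%N by rewrite divnK // pdiv_dvd.
have f'_lt : (f' < f)%N by rewrite ltn_Pdiv // prime_gt1.
have f'_gt0 : (0 < f')%N by move: f_gt0; rewrite f_eq muln_gt0 => /andP [].
have discq' : qdisc q = p%:Z ^+ 2 * (f'%:Z ^+ 2 * D) by rewrite discq f_eq PoszM; ring.
have [M1 [q1 [detM1 prim_q1 qM1_eq]]] :=
  qdescent_prime p_pr prim_q discq' (disc_mod4_sqM f'%:Z D4).
have p_neq0 : p%:Z != 0 by rewrite eqz_nat -lt0n prime_gt0.
have discq1 := qdisc_descent p_neq0 detM1 qM1_eq discq'.
have [M2 [q2 [detM2 prim_q2 qM2_eq]]] := IH f' f'_lt q1 f'_gt0 prim_q1 discq1 D4.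
exists (M1 *m M2), q2; split=> //.
  by rewrite det_mulmx detM1 detM2 f_eq PoszM mulrC.
by rewrite -qsubM qM1_eq qsub_scale qM2_eq qscaleM -exprMn f_eq PoszM mulrC.
Qed.

Section Moebius.
Variable R : realType.
Implicit Types (x : R) (M N : 'M[int]_2).

Lemma mob_rowM M N x i : mob_den N x != 0 ->
  ((M *m N) i 0)%:~R * x + ((M *m N) i 1)%:~R =
  ((M i 0)%:~R * mob_act N x + (M i 1)%:~R) * mob_den N x :> R.
Proof.
rewrite /mob_act /mob_den => den_neq0.
by rewrite !mulmx2E !(rmorphD, rmorphM) /=; field.
Qed.

Lemma mob_denM M N x : mob_den N x != 0 ->
  mob_den (M *m N) x = mob_den M (mob_act N x) * mob_den N x.
Proof. exact: mob_rowM. Qed.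

Lemma mob_actM M N x : mob_den N x != 0 ->
  mob_act (M *m N) x = mob_act M (mob_act N x).
Proof.
move=> den_neq0; rewrite {1}/mob_act mob_rowM // mob_denM //.
by rewrite -mulf_div divff // mulr1.
Qed.

Lemma mob_den_scalar (k : int) x : mob_den k%:M x = k%:~R.
Proof. by rewrite /mob_den !mxE /= mulr0n mulr1n mul0r add0r. Qed.

Lemma mob_act_scalar (k : int) x : k != 0 -> mob_act k%:M x = x.
Proof.
move=> k_neq0; rewrite /mob_act mob_den_scalar !mxE /= mulr0n mulr1n addr0.
by rewrite mulrAC divff ?mul1r // intr_eq0.
Qed.

Lemma rational_mob_act M x : rational x -> rational (mob_act M x).
Proof.
case=> r _ <-.
exists (((M 0 0)%:~R * r + (M 0 1)%:~R) / ((M 1 0)%:~R * r + (M 1 1)%:~R)) => //.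
by rewrite fmorph_div /= !rmorphD !rmorphM /= !ratr_int.
Qed.

Lemma mob_den_irrational M x : irrational x -> \det M != 0 -> mob_den M x != 0.
Proof.
move=> irr_x detM_neq0; rewrite /mob_den.
have [c0 | c_neq0] := eqVneq (M 1 0) 0.
  rewrite c0 mul0r add0r intr_eq0; apply: contraNneq detM_neq0 => d0.
  by rewrite det_mx2 c0 d0 !mulr0 subrr.
apply/eqP => /eqP; rewrite addr_eq0 => /eqP cx_eq; apply: irr_x.
exists (- (M 1 1)%:~R / (M 1 0)%:~R) => //.
by rewrite fmorph_div rmorphN /= !ratr_int -cx_eq mulrAC divff ?mul1r // intr_eq0.
Qed.

Lemma mob_act_adjK M x : irrational x -> \det M != 0 ->
  mob_den M (mob_act (\adj M) x) != 0 /\ mob_act M (mob_act (\adj M) x) = x.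
Proof.
move=> irr_x detM_neq0.
have den_adj_neq0 := mob_den_irrational irr_x (det_adj_neq0 detM_neq0).
split; last by rewrite -mob_actM // mul_mx_adj mob_act_scalar.
apply/eqP => den0; have := mob_denM M den_adj_neq0.
by rewrite mul_mx_adj mob_den_scalar den0 mul0r; apply/eqP; rewrite intr_eq0.
Qed.

Definition qeval q x : R := (qa q)%:~R * x ^+ 2 + (qb q)%:~R * x + (qc q)%:~R.

Lemma qeval_sub q M x : mob_den M x != 0 ->
  qeval (qsub q M) x = qeval q (mob_act M x) * mob_den M x ^+ 2.
Proof.
rewrite /qeval /qsub /qval /mob_act /mob_den /= => den_neq0.
by rewrite !(rmorphD, rmorphM, rmorphXn) /=; field.
Qed.

Lemma qeval_scale k q x : qeval (qscale k q) x = k%:~R * qeval q x.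
Proof. by rewrite /qeval /qscale /= !rmorphM /=; ring. Qed.

Lemma qeval_root_descent q q' M k x :
  k != 0 -> qsub q M = qscale k q' -> mob_den M x != 0 ->
  qeval q (mob_act M x) = 0 -> qeval q' x = 0.
Proof.
move=> k_neq0 qM_eq den_neq0 root_q.
have := qeval_sub q den_neq0; rewrite qM_eq qeval_scale root_q mul0r.
by move/eqP; rewrite mulf_eq0 intr_eq0 (negbTE k_neq0) => /eqP.
Qed.

End Moebius.

Theorem lemma4p42 (R : realType) (beta : R) (f : nat) :
  @irrational R beta -> has_conductor beta f ->
  exists (B : 'M[int]_2) (alpha : R),
    \det B = f%:Z /\ @irrational R alpha /\ has_conductor alpha 1 /\
    mob_den B alpha != 0 /\ beta = mob_act B alpha.
Proof.
move=> irr_beta [f_gt0 [a [b [c [prim_q [root_beta [D0 [fund_D0 disc_q]]]]]]]].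
have disc_q' : qdisc (QForm a b c) = f%:Z ^+ 2 * D0.
  by rewrite /qdisc disc_q -natz natrX natz.
have [M [q' [detM prim_q' qM_eq]]] :=
  @qdescent_conductor f (QForm a b c) D0 f_gt0 prim_q disc_q'
                      (fundamental_disc_mod4 fund_D0).
have f_neq0 : f%:Z != 0 by rewrite eqz_nat -lt0n.
have detM_neq0 : \det M != 0 by rewrite detM.
have [den_neq0 beta_eq] := mob_act_adjK irr_beta detM_neq0.
exists M, (mob_act (\adj M) beta); split=> //; split.
  by move=> /(rational_mob_act M); rewrite beta_eq.
split; last by rewrite beta_eq.
split=> //; exists (qa q'), (qb q'), (qc q'); split=> //; split.
  apply: (qeval_root_descent _ qM_eq den_neq0); first by rewrite expf_neq0.
  by rewrite beta_eq.
by exists D0; split; rewrite // mul1r; exact: qdisc_descent f_neq0 detM qM_eq disc_q'.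
Qed.
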